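(* Let $R_1,R_2$ be commutative rings with nonzero identity, $I_1$ an ideal of $R_1$, $I_2$ an ideal of $R_2$, $R=R_1\times R_2$ and $I=I_1\times I_2$. If $(x_1,y_1),(x_2,y_2)\in V(\Gamma''_{I_1}(R_1))\times V(\Gamma''_{I_2}(R_2))$ are not adjacent in $\Gamma''_I(R)$, then $x_1$ is not adjacent to $x_2$ in $\Gamma''_{I_1}(R_1)$ and $y_1$ is not adjacent to $y_2$ in $\Gamma''_{I_2}(R_2)$.
   Context: $R_1\times R_2$ has componentwise operations; $V(G)$ denotes the vertex set of a graph $G$. For a commutative ring $S$ and an ideal $J$ of $S$, $\Gamma''_J(S)$ is the simple undirected graph whose vertex set is $\{x\in S\setminus J : xS+J\neq S\}$, with distinct vertices $x,y$ adjacent if and only if $x\notin yS+J$ and $y\notin xS+J$. *)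

From HB Require Import structures.
From mathcomp Require Import all_boot all_algebra.
Set Implicit Arguments. Unset Strict Implicit. Unset Printing Implicit Defensive.
Import GRing.Theory.
Local Open Scope ring_scope.

Definition is_ideal (S : comNzRingType) (J : S -> Prop) : Prop :=
  [/\ J 0, (forall x y, J x -> J y -> J (x + y)) & (forall a x, J x -> J (a * x))].

Definition in_principal_plus (S : comNzRingType) (J : S -> Prop) (x z : S) : Prop :=
  exists s j, J j /\ z = x * s + j.

(* x is a vertex of Gamma''_J(S):  x \notin J  and  xS + J <> S *)
Definition gvertex (S : comNzRingType) (J : S -> Prop) (x : S) : Prop :=
  ~ J x /\ ~ (forall z, in_principal_plus J x z).

Definition gadj (S : comNzRingType) (J : S -> Prop) (x y : S) : Prop :=
  [/\ gvertex J x, gvertex J y, x <> y,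
      ~ in_principal_plus J y x & ~ in_principal_plus J x y].

Definition prod_ideal (R1 R2 : comNzRingType) (I1 : R1 -> Prop) (I2 : R2 -> Prop)
  : (R1 * R2)%type -> Prop := fun p => I1 p.1 /\ I2 p.2.

From mathcomp Require Import all_boot all_algebra.

Set Implicit Arguments.
Unset Strict Implicit.
Unset Printing Implicit Defensive.

(* Adjacency in a factor already lifts to adjacency in the product, whatever
   the other coordinates are: the product vertex condition and the relation
   [z \in xS + J] both project onto the first (resp. second) factor, and
   distinct first coordinates give distinct pairs. The corollary is the
   contrapositive. *)

Section ProductGraph.

Variables (R1 R2 : comNzRingType) (I1 : R1 -> Prop) (I2 : R2 -> Prop).

Local Notation I := (prod_ideal I1 I2).

Lemma in_principal_plus_fst (p q : R1 * R2) :
  in_principal_plus I p q -> in_principal_plus I1 p.1 q.1.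
Proof. by case=> s [j [[Ij1 _] ->]]; exists s.1, j.1. Qed.

Lemma in_principal_plus_snd (p q : R1 * R2) :
  in_principal_plus I p q -> in_principal_plus I2 p.2 q.2.
Proof. by case=> s [j [[_ Ij2] ->]]; exists s.2, j.2. Qed.

Lemma gvertex_prodl (x : R1) (y : R2) : gvertex I1 x -> gvertex I (x, y).
Proof.
case=> Ix gen_x; split=> [[] // | gen_xy]; apply: gen_x => z.
exact: (in_principal_plus_fst (gen_xy (z, 0%R))).
Qed.

Lemma gvertex_prodr (x : R1) (y : R2) : gvertex I2 y -> gvertex I (x, y).
Proof.
case=> Iy gen_y; split=> [[] // | gen_xy]; apply: gen_y => z.
exact: (in_principal_plus_snd (gen_xy (0%R, z))).
Qed.

Lemma gadj_prodl (x1 x2 : R1) (y1 y2 : R2) :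
  gadj I1 x1 x2 -> gadj I (x1, y1) (x2, y2).
Proof.
case=> v1 v2 neq_x nin21 nin12; split; try exact: gvertex_prodl.
- by case.
- by move/in_principal_plus_fst.
- by move/in_principal_plus_fst.
Qed.

Lemma gadj_prodr (x1 x2 : R1) (y1 y2 : R2) :
  gadj I2 y1 y2 -> gadj I (x1, y1) (x2, y2).
Proof.
case=> v1 v2 neq_y nin21 nin12; split; try exact: gvertex_prodr.
- by case.
- by move/in_principal_plus_snd.
- by move/in_principal_plus_snd.
Qed.

End ProductGraph.

Theorem corollary2p2 (R1 R2 : comNzRingType) (I1 : R1 -> Prop) (I2 : R2 -> Prop)
  (hI1 : is_ideal I1) (hI2 : is_ideal I2)
  (x1 x2 : R1) (y1 y2 : R2)
  (hx1 : gvertex I1 x1) (hx2 : gvertex I1 x2)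
  (hy1 : gvertex I2 y1) (hy2 : gvertex I2 y2)
  (hna : ~ gadj (prod_ideal I1 I2) ((x1, y1) : (R1 * R2)%type) (x2, y2)) :
  ~ gadj I1 x1 x2 /\ ~ gadj I2 y1 y2.
Proof.
split=> adj; apply: hna; [exact: gadj_prodl adj | exact: gadj_prodr adj].
Qed.
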